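(* Let $n \geq 1$ and $m \geq 1$ be integers, and let $p:\mathbb{C} \rightarrow \mathbb{C}$ be a polynomial of degree $n+m$ whose roots (listed with multiplicity) are $a_1, \dots, a_{n+m}$, where $|a_i| \leq 1$ for $1 \leq i \leq n$ (these $n$ roots lie inside the unit disk) and the remaining $m$ roots $a_{n+1}, \dots, a_{n+m}$ lie outside the unit disk. Suppose there is a real number $d$ with $$ \min_{n+1 \leq i \leq n+m}{ |a_i|} \geq d > 1 + \frac{2 m}{n}.$$ Then $p'$ has $n-1$ roots (counted with multiplicity) inside the unit disk and its remaining $m$ roots have modulus at least $\frac{dn - m}{n+m}$, a quantity which is $> 1$.
   Context: Roots of $p$ and of $p'$ are counted with multiplicity; ''inside the unit disk'' means in the closed disk $\{z : |z| \leq 1\}$. *)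

From mathcomp Require Import all_boot all_order all_algebra.
From mathcomp Require Import reals complex.

From mathcomp Require Import all_boot all_order all_algebra.
From mathcomp Require Import reals complex polyrcf.
From mathcomp Require Import ring lra.

(* Let P be the monic polynomial with the roots a_i of p and r := (dn - m)/(n + m).
   For 1 < |w| < r, Re (w P'(w)/P(w)) = Re sum_i w/(w - a_i) > 0, since a root in
   the disk contributes at least |w|/(|w| + 1) and an outer one at least
   -|w|/(d - |w|).  Hence no h_t := P + t (X P' - P), 0 <= t <= 1, has a root in
   that annulus, and the number of roots of h_t in the unit disk does not depend
   on t: it is n for h_0 = P, and one more than the count for P' for h_1 = X P'.
   For the invariance, take 1 < rho with rho^2 <= r, N large and Z the N-th roots
   of rho^N.  Then sum_{z in Z} z h_t'(z)/h_t(z) = sum_w N rho^N/(rho^N - w^N),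
   over the roots w of h_t, is within N/4 of N times that number, and it is a
   rational function of t without poles on [0, 1]; by the intermediate value
   theorem it cannot move from one multiple of N to another. *)

Set Implicit Arguments.
Unset Strict Implicit.
Unset Printing Implicit Defensive.

Import Order.TTheory GRing.Theory Num.Theory Normc.
Local Open Scope ring_scope.
Local Open Scope complex_scope.

Lemma sumr_const_seq (R : pzSemiRingType) (I : Type) (s : seq I) (x : R) :
  \sum_(i <- s) x = (size s)%:R * x.
Proof. by rewrite big_const_seq count_predT iter_addr_0 mulr_natl. Qed.

Lemma size_deriv_num (R : numDomainType) (p : {poly R}) : size p^`() = (size p).-1.
Proof.
have [lep1|lt1p] := leqP (size p) 1.
  by rewrite {1}[p]size1_polyC // derivC size_poly0 -subn1 (eqnP lep1).
rewrite size_poly_eq // mulrn_eq0 -subn2 -subSn // subn2.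
by rewrite lead_coef_eq0 -size_poly_eq0 -(subnKC lt1p).
Qed.

Lemma exprn_ge_lin (R : realDomainType) (x : R) (k : nat) :
  1 <= x -> 1 + k%:R * (x - 1) <= x ^+ k.
Proof.
move=> x1; elim: k => [|k IH]; first by rewrite mul0r addr0 expr0.
rewrite exprS mulrS.
have : x * (1 + k%:R * (x - 1)) <= x * x ^+ k by rewrite ler_wpM2l //; lra.
have : 0 <= k%:R * (x - 1) ^+ 2 by rewrite mulr_ge0 ?ler0n ?sqr_ge0.
nra.
Qed.

Lemma exists_exprn_ge (R : archiRealFieldType) (x B : R) :
  1 < x -> exists2 k, (0 < k)%N & B <= x ^+ k.
Proof.
move=> x1; have Bx0 : 0 <= `|B| / (x - 1).
  by rewrite divr_ge0 ?normr_ge0 // subr_ge0 ltW.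
exists (Num.bound (`|B| / (x - 1))).+1 => //.
have := exprn_ge_lin (Num.bound (`|B| / (x - 1))).+1 (ltW x1); rewrite -natr1.
have := archi_boundP Bx0; rewrite ltr_pdivrMr ?subr_gt0 //.
have := ler_norm B; nra.
Qed.

Definition crit_radius (R : numFieldType) (n m : nat) (d : R) : R :=
  (d * n%:R - m%:R) / (n + m)%:R.

Lemma lt_crit_radius (R : realFieldType) (n m : nat) (d x : R) :
  0 <= x -> x < crit_radius n m d -> x * (n + m)%:R < d * n%:R - m%:R /\ x < d.
Proof.
rewrite /crit_radius => x0 xr; have n0 : (0 : R) <= n%:R := ler0n _ _.
have m0 : (0 : R) <= m%:R := ler0n _ _.
have nm_gt0 : (0 : R) < (n + m)%:R.
  rewrite ltr0n lt0n; apply: contraTneq xr => ->.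
  by rewrite mulr0n invr0 mulr0 -leNgt.
have xnm : x * (n + m)%:R < d * n%:R - m%:R by rewrite -ltr_pdivlMr.
split=> //; rewrite ltNge; apply/negP => dx.
have := ler_wpM2r n0 dx; have := mulr_ge0 x0 m0; rewrite natrD in xnm; nra.
Qed.

Lemma crit_radius_gt1 (R : realFieldType) (n m : nat) (d : R) :
  (0 < n)%N -> 1 + 2 * m%:R / n%:R < d -> 1 < crit_radius n m d.
Proof.
move=> n_gt0 hd; have n0 : (0 : R) < n%:R by rewrite ltr0n.
have : (1 + 2 * m%:R / n%:R) * n%:R < d * n%:R by rewrite ltr_pM2r.
rewrite mulrDl mul1r divfK ?gt_eqF // => hdn.
by rewrite /crit_radius ltr_pdivlMr ?ltr0n ?addn_gt0 ?n_gt0 // natrD; lra.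
Qed.

Section FieldPolynomials.
Variable F : fieldType.

Lemma horner_deriv_prod_XsubC (s : seq F) (x : F) : x \notin s ->
  (\prod_(w <- s) ('X - w%:P))^`().[x] =
  (\prod_(w <- s) ('X - w%:P)).[x] * \sum_(w <- s) (x - w)^-1.
Proof.
elim: s => [|w s IH]; first by rewrite !big_nil mulr0 -polyC1 derivC horner0.
rewrite inE negb_or => /andP[xw /IH {}IH].
rewrite !big_cons derivM derivXsubC !hornerE IH mulrDr; congr (_ + _).
  by rewrite mulrC mulKf ?subr_eq0.
by rewrite mulrA.
Qed.

Lemma sum_div_sub_roots (N : nat) (A w : F) (Z : seq F) :
  (0 < N)%N -> 'X^N - A%:P = \prod_(z <- Z) ('X - z%:P) -> w ^+ N != A ->
  \sum_(z <- Z) z / (z - w) = N%:R * A / (A - w ^+ N).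
Proof.
move=> N_gt0 XnE wNA.
have sizeZ : size Z = N.
  by have := size_XnsubC A N_gt0; rewrite XnE size_prod_XsubC => -[].
have wZ : w \notin Z by rewrite -root_prod_XsubC -XnE rootE !hornerE subr_eq0.
have := horner_deriv_prod_XsubC wZ.
rewrite -XnE derivB derivXn derivC subr0 !hornerE hornerMn hornerXn => derE.
have -> : \sum_(z <- Z) z / (z - w) = \sum_(z <- Z) (1 - w * (w - z)^-1).
  apply: eq_big_seq => z zZ.
  have zw : z - w != 0 by rewrite subr_eq0; apply: contraNneq wZ => <-.
  have wz : w - z != 0 by rewrite -opprB oppr_eq0.
  by field; rewrite zw wz.
rewrite big_split /= sumrN -mulr_sumr -[\sum_(z <- Z) 1]/(\sum_(z <- Z) 1%:R).
rewrite -natr_sum sum1_size sizeZ.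
have wNA0 : w ^+ N - A != 0 by rewrite subr_eq0.
have AwN0 : A - w ^+ N != 0 by rewrite subr_eq0 eq_sym.
have -> : \sum_(z <- Z) (w - z)^-1 = w ^+ N.-1 *+ N / (w ^+ N - A).
  by rewrite derE mulrC mulKf.
have wN : w ^+ N = w * w ^+ N.-1 by rewrite -exprS prednK.
rewrite wN in wNA0 AwN0 *; rewrite -mulr_natr.
by field; rewrite wNA0 AwN0.
Qed.

(* For Z the N-th roots of rho^N, this is N times a Riemann sum of the
   argument-principle integral (2 pi i)^-1 \oint f'/f over |z| = rho. *)
Definition logder_sum (Z : seq F) (f : {poly F}) : F :=
  \sum_(z <- Z) z * f^`().[z] / f.[z].

Lemma logder_sum_prod_XsubC (N : nat) (A c : F) (Z t : seq F) :
  (0 < N)%N -> 'X^N - A%:P = \prod_(z <- Z) ('X - z%:P) -> c != 0 ->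
  all (fun w => w ^+ N != A) t ->
  logder_sum Z (c *: \prod_(w <- t) ('X - w%:P)) =
  \sum_(w <- t) N%:R * A / (A - w ^+ N).
Proof.
move=> N_gt0 XnE c0 tA.
have -> : logder_sum Z (c *: \prod_(w <- t) ('X - w%:P)) =
    \sum_(z <- Z) \sum_(w <- t) z / (z - w).
  apply: eq_big_seq => z zZ.
  have zN : z ^+ N = A.
    have : root ('X^N - A%:P) z by rewrite XnE root_prod_XsubC.
    by rewrite rootE !hornerE subr_eq0 => /eqP.
  have zt : z \notin t by apply/negP => /(allP tA); rewrite zN eqxx.
  have Pz0 : (\prod_(w <- t) ('X - w%:P)).[z] != 0.
    by rewrite -/(root _ z) root_prod_XsubC.
  rewrite derivZ !hornerZ horner_deriv_prod_XsubC // -mulr_sumr.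
  by field; rewrite c0 Pz0.
rewrite exchange_big /=; apply: eq_big_seq => w wt.
exact: sum_div_sub_roots (allP tA w wt).
Qed.

Lemma horner_sum_ratio (I : Type) (s : seq I) (f g : I -> {poly F}) :
  exists U V : {poly F}, forall x, all (fun i => (g i).[x] != 0) s ->
    V.[x] != 0 /\ \sum_(i <- s) (f i).[x] / (g i).[x] = U.[x] / V.[x].
Proof.
elim: s => [|i s [U [V IH]]].
  by exists 0, 1 => x _; rewrite big_nil !hornerE oner_eq0.
exists (f i * V + g i * U), (g i * V) => x /= /andP[gi0 /IH[V0 sumE]].
rewrite big_cons sumE !hornerE mulf_neq0 //; split => //.
by field; rewrite gi0 V0.
Qed.

End FieldPolynomials.

Section ComplexNorm.
Variable R : rcfType.
Implicit Types w z : R[i].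

Lemma normC_normc w : `|w| = (normc w)%:C.
Proof. by case: w. Qed.

Lemma normC_le1 (w : R[i]) : (`|w| <= 1) = (normc w <= 1).
Proof. by rewrite normC_normc -lecR. Qed.

Lemma lec_normC (x : R) (w : R[i]) : (x%:C <= `|w|) = (x <= normc w).
Proof. by rewrite normC_normc lecR. Qed.

Lemma normc_ge0 w : 0 <= normc w.
Proof. exact: (@normr_ge0 _ (Rcomplex R)). Qed.

Lemma normc_eq0 w : (normc w == 0) = (w == 0).
Proof. exact: (@normr_eq0 _ (Rcomplex R)). Qed.

Lemma lerB_normc w z : normc w - normc z <= normc (w - z).
Proof. exact: (@lerB_dist _ (Rcomplex R)). Qed.

Lemma normc_sum (I : Type) (s : seq I) (F : I -> R[i]) :
  normc (\sum_(i <- s) F i) <= \sum_(i <- s) normc (F i).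
Proof. exact: (@ler_norm_sum _ (Rcomplex R)). Qed.

Lemma normcX w k : normc (w ^+ k) = normc w ^+ k.
Proof. by elim: k => [|k IH]; rewrite ?normc1 // !exprS normcM IH. Qed.

Lemma normc_real (x : R) : normc x%:C = `|x|.
Proof. by rewrite /= expr0n /= addr0 sqrtr_sqr. Qed.

Lemma normc_nat k : normc (k%:R : R[i]) = k%:R.
Proof. by rewrite -(rmorph_nat (real_complex R)) normc_real normr_nat. Qed.

Lemma normc_conj w : normc (conjc w) = normc w.
Proof. by case: w => x y /=; rewrite sqrrN. Qed.

Lemma Re_sum (I : Type) (s : seq I) (F : I -> R[i]) :
  complex.Re (\sum_(i <- s) F i) = \sum_(i <- s) complex.Re (F i).
Proof. exact: (@raddf_sum _ _ (@complex.Re R : Rcomplex R -> R)). Qed.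

Lemma Re_le_normc w : `|complex.Re w| <= normc w.
Proof.
case: w => x y /=; rewrite -sqrtr_sqr ler_sqrt ?lerDl ?sqr_ge0 //.
by rewrite addr_ge0 ?sqr_ge0.
Qed.

Lemma Re_add (X Y : R[i]) : complex.Re (X + Y) = complex.Re X + complex.Re Y.
Proof. by case: X Y => [x y] [u v]. Qed.

Lemma Re_sub (X Y : R[i]) : complex.Re (X - Y) = complex.Re X - complex.Re Y.
Proof. by case: X Y => [x y] [u v]. Qed.

Lemma Re_natr (k : nat) : complex.Re (k%:R : R[i]) = k%:R.
Proof. by elim: k => [|k IH] //; rewrite !mulrS Re_add IH. Qed.

Lemma Re_subn_le_normc (X : R[i]) (k : nat) :
  `|complex.Re X - k%:R| <= normc (X - k%:R).
Proof. by rewrite -Re_natr -Re_sub Re_le_normc. Qed.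

Lemma Re_mul_conj_le w z : `|complex.Re (w * conjc z)| <= normc w * normc z.
Proof. by rewrite -(normc_conj z) -normcM Re_le_normc. Qed.

Lemma normc_subr_sqr w z :
  normc (w - z) ^+ 2 = normc w ^+ 2 - 2 * complex.Re (w * conjc z) + normc z ^+ 2.
Proof.
case: w z => [x y] [u v] /=.
rewrite !sqr_sqrtr ?addr_ge0 ?sqr_ge0 //; ring.
Qed.

Lemma Re_div_subE w z : w != z ->
  complex.Re (w / (w - z)) = (normc w ^+ 2 - complex.Re (w * conjc z)) / normc (w - z) ^+ 2.
Proof.
move=> wz; have : normc (w - z) ^+ 2 != 0 by rewrite expf_eq0 normc_eq0 subr_eq0.
case: w z {wz} => [x y] [u v] /=.
rewrite !sqr_sqrtr ?addr_ge0 ?sqr_ge0 // => q0.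
by field.
Qed.

Lemma Re_div_sub_ge_disk w z : normc z <= 1 -> 1 < normc w ->
  normc w / (normc w + 1) <= complex.Re (w / (w - z)).
Proof.
move=> z1 w1; have wz : w != z by apply: contraTneq z1 => <-; rewrite -ltNge.
have q_gt0 : 0 < normc (w - z) ^+ 2 by rewrite exprn_even_gt0 //= normc_eq0 subr_eq0.
have := Re_mul_conj_le w z; have := normc_ge0 z; have := normc_subr_sqr w z.
rewrite Re_div_subE //.
move: q_gt0 z1 w1; move: (normc (w - z) ^+ 2) (normc w) (normc z) (complex.Re _).
move=> q rho alpha A q_gt0 a1 r1 qE a0; rewrite ler_norml => /andP[A1 A2].
have r0 : 0 < rho + 1 by lra.
rewrite ler_pdivrMr // mulrAC ler_pdivlMr // qE.
have h1 : 0 <= (rho - 1) * (A + rho * alpha) by apply: mulr_ge0; lra.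
have h2 : 0 <= rho * (rho + alpha) * (1 - alpha) by rewrite !mulr_ge0 //; lra.
lra.
Qed.

Lemma Re_div_sub_ge_out w z (d : R) : d <= normc z -> normc w < d ->
  - (normc w / (d - normc w)) <= complex.Re (w / (w - z)).
Proof.
move=> dz wd; have wz : w != z by apply: contraTneq dz => <-; rewrite -ltNge.
have q_gt0 : 0 < normc (w - z) ^+ 2 by rewrite exprn_even_gt0 //= normc_eq0 subr_eq0.
have := Re_mul_conj_le w z; have := normc_ge0 w; have := normc_subr_sqr w z.
rewrite Re_div_subE //.
move: q_gt0 dz wd; move: (normc (w - z) ^+ 2) (normc w) (normc z) (complex.Re _).
move=> q rho alpha A q_gt0 da rd qE r0; rewrite ler_norml => /andP[A1 A2].
have dr : 0 < d - rho by lra.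
rewrite -subr_ge0 opprK addrC.
have -> : rho / (d - rho) + (rho ^+ 2 - A) / q =
    ((rho ^+ 2 - A) * (d - rho) + rho * q) / (q * (d - rho)).
  by field; rewrite !gt_eqF.
apply: divr_ge0; last by apply: mulr_ge0; lra.
have h1 : 0 <= (d + rho) * (rho * alpha - A) by apply: mulr_ge0; lra.
have h2 : 0 <= rho * (alpha - rho) * (alpha - d) by rewrite !mulr_ge0 //; lra.
rewrite qE; lra.
Qed.

Lemma Re_sum_div_sub_gt0 (a b : seq R[i]) (d : R) (w : R[i]) :
  all (fun z => normc z <= 1) a -> all (fun z => d <= normc z) b -> 1 < normc w ->
  normc w < crit_radius (size a) (size b) d ->
  0 < complex.Re (\sum_(z <- a ++ b) w / (w - z)).
Proof.
move=> ha hb w1 wr; have [+ rd] := lt_crit_radius (normc_ge0 w) wr.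
rewrite natrD; move sa: (size a) => n; move sb: (size b) => m => wnm.
have n0 : (0 : R) <= n%:R := ler0n _ _; have m0 : (0 : R) <= m%:R := ler0n _ _.
rewrite Re_sum big_cat /=.
have La : n%:R * (normc w / (normc w + 1)) <= \sum_(z <- a) complex.Re (w / (w - z)).
  rewrite -sa -sumr_const_seq big_seq [leRHS]big_seq; apply: ler_sum => z za.
  exact: Re_div_sub_ge_disk (allP ha z za) w1.
have Lb : m%:R * - (normc w / (d - normc w)) <= \sum_(z <- b) complex.Re (w / (w - z)).
  rewrite -sb -sumr_const_seq big_seq [leRHS]big_seq; apply: ler_sum => z zb.
  exact: Re_div_sub_ge_out (allP hb z zb) rd.
move: La Lb wnm w1 rd (normc_ge0 w); move: (normc w) => rho La Lb wnm r1 rd r0.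
suff : 0 < n%:R * (rho / (rho + 1)) + m%:R * - (rho / (d - rho)) by lra.
have -> : n%:R * (rho / (rho + 1)) + m%:R * - (rho / (d - rho)) =
    rho * (n%:R * (d - rho) - m%:R * (rho + 1)) / ((rho + 1) * (d - rho)).
  by field; rewrite !gt_eqF // ?subr_gt0; lra.
by rewrite divr_gt0 ?mulr_gt0 //; lra.
Qed.

End ComplexNorm.

Section RootCounting.
Variable R : rcfType.

Lemma root_weight_bound (u : R) (W : R[i]) :
  1 < u -> (normc W <= 1) || (u ^+ 2 <= normc W) ->
  normc (u%:C / (u%:C - W) - ((normc W <= 1)%R : nat)%:R) <= (u - 1)^-1.
Proof.
move=> u1 hW; have nu : normc u%:C = u by rewrite normc_real gtr0_norm //; lra.
have dist1 : u - normc W <= normc (u%:C - W) by rewrite -{1}nu lerB_normc.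
have dist2 : normc W - u <= normc (u%:C - W).
  by rewrite -[normc (u%:C - W)]normcN opprB -{1}nu lerB_normc.
have W0 := normc_ge0 W.
have uW_gt0 : 0 < normc (u%:C - W) by move: hW => /orP[]; nra.
have uW0 : u%:C - W != 0 by rewrite -normc_eq0 gt_eqF.
rewrite -[(u - 1)^-1]div1r ler_pdivlMr ?subr_gt0 //.
case: (leP (normc W) 1) hW => [W1 _ | W1 /= uW].
  have -> : u%:C / (u%:C - W) - 1%:R = W / (u%:C - W) by field.
  rewrite normcM normcV mulrAC ler_pdivrMr //; nra.
rewrite subr0 normcM normcV nu mulrAC ler_pdivrMr //; nra.
Qed.

Lemma logder_sum_count_bound (N : nat) (rho : R) (c : R[i]) (Z t : seq R[i]) :
  (0 < N)%N -> 1 < rho -> 'X^N - ((rho ^+ N)%:C)%:P = \prod_(z <- Z) ('X - z%:P) ->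
  c != 0 -> all (fun w => (normc w <= 1) || (rho ^+ 2 <= normc w)) t ->
  normc (logder_sum Z (c *: \prod_(w <- t) ('X - w%:P))
         - N%:R * (count (fun w => normc w <= 1) t)%:R)
  <= N%:R * (size t)%:R / (rho ^+ N - 1).
Proof.
move=> N_gt0 rho1 XnE c0 ht; set u := rho ^+ N.
have u1 : 1 < u by rewrite exprn_egt1 // -lt0n.
have powN w : (normc w <= 1) || (rho ^+ 2 <= normc w) ->
    (normc (w ^+ N) <= 1) = (normc w <= 1) /\
    (normc (w ^+ N) <= 1) || (u ^+ 2 <= normc (w ^+ N)).
  rewrite normcX; case: (leP (normc w) 1) => /= [w1 _ | w1 rw].
    by rewrite exprn_ile1 ?normc_ge0.
  have uw : u ^+ 2 <= normc w ^+ N.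
    by rewrite /u -exprM mulnC exprM lerXn2r // nnegrE ?normc_ge0 // exprn_ge0 //; lra.
  have u2 : 1 < u ^+ 2 by rewrite exprn_egt1.
  by rewrite uw orbT leNgt (lt_le_trans u2 uw).
have tA : all (fun w => w ^+ N != u%:C) t.
  apply/allP => w /(allP ht) /powN[_ hw]; apply/eqP => wN.
  move: hw; rewrite wN normc_real gtr0_norm; last lra.
  have : u < u ^+ 2 by rewrite expr2 ltr_pMr //; lra.
  by case: leP => //= _; lra.
rewrite (logder_sum_prod_XsubC N_gt0 XnE c0 tA).
rewrite -sumn_count sumnE big_map natr_sum mulr_sumr -sumrB.
apply: le_trans (normc_sum _ _) _.
have -> : N%:R * (size t)%:R / (u - 1) = \sum_(w <- t) N%:R / (u - 1).
  by rewrite sumr_const_seq mulrA [(size t)%:R * _]mulrC.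
rewrite big_seq [leRHS]big_seq; apply: ler_sum => w wt.
have [indN hW] := powN w (allP ht w wt).
rewrite -indN -mulrA -mulrBr normcM normc_nat ler_pM2l ?ltr0n //.
exact: root_weight_bound.
Qed.

Lemma normc_root_XnsubC (N : nat) (rho : R) (Z : seq R[i]) (z : R[i]) :
  (0 < N)%N -> 0 <= rho -> 'X^N - ((rho ^+ N)%:C)%:P = \prod_(z <- Z) ('X - z%:P) ->
  z \in Z -> normc z = rho.
Proof.
move=> N_gt0 rho0 XnE zZ.
have : root ('X^N - ((rho ^+ N)%:C)%:P) z by rewrite XnE root_prod_XsubC.
rewrite rootE !hornerE subr_eq0 => /eqP/(congr1 (@normc R)).
rewrite normcX normc_real ger0_norm ?exprn_ge0 // => /eqP.
by rewrite eqrXn2 ?normc_ge0 // => /eqP.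
Qed.

Lemma Re_logder_sum_near_count (N K : nat) (rho : R) (c : R[i]) (Z t : seq R[i]) :
  (0 < N)%N -> 1 < rho -> (4 * K + 1)%:R <= rho ^+ N ->
  'X^N - ((rho ^+ N)%:C)%:P = \prod_(z <- Z) ('X - z%:P) -> c != 0 ->
  (size t <= K)%N -> all (fun w => (normc w <= 1) || (rho ^+ 2 <= normc w)) t ->
  `|complex.Re (logder_sum Z (c *: \prod_(w <- t) ('X - w%:P)))
    - (N * count (fun w => normc w <= 1) t)%:R| <= N%:R / 4%:R.
Proof.
move=> N_gt0 rho1 hN XnE c0 tK ht.
apply: le_trans (Re_subn_le_normc _ _) _; rewrite natrM.
apply: le_trans (logder_sum_count_bound N_gt0 rho1 XnE c0 ht) _.
have sK : (size t)%:R <= K%:R :> R by rewrite ler_nat.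
have N_gt0' : (0 : R) < N%:R by rewrite ltr0n.
rewrite natrD natrM in hN.
have s0 : (0 : R) <= (size t)%:R := ler0n _ _.
have K0 : (0 : R) <= K%:R := ler0n _ _.
have u1 : 1 < rho ^+ N by rewrite exprn_egt1 // -lt0n.
rewrite ler_pdivrMr; last lra.
have : 0 <= N%:R * (rho ^+ N - 1 - 4 * (size t)%:R) by rewrite mulr_ge0 //; lra.
lra.
Qed.

End RootCounting.

Section RealParts.
Variable R : rcfType.

Lemma mulc_conj (w : R[i]) : w * conjc w = (normc w ^+ 2)%:C.
Proof.
case: w => x y; apply/eqP; rewrite eq_complex /= sqr_sqrtr ?addr_ge0 ?sqr_ge0 //.
by apply/andP; split; apply/eqP; ring.
Qed.

Lemma horner_map_Re (W : {poly R[i]}) (t : R) :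
  (map_poly (@complex.Re R) W).[t] = complex.Re W.[t%:C].
Proof.
rewrite (horner_coef_wide _ (size_poly _ _)) (horner_coef_wide _ (leqnn _)) Re_sum.
apply: eq_bigr => i _; rewrite coef_map_id0 // -rmorphXn /=.
by case: W`_i => x y /=; rewrite mulr0 subr0.
Qed.

Lemma Re_horner_ratio (U V : {poly R[i]}) : exists Ar Br : {poly R},
  forall t : R, V.[t%:C] != 0 ->
  0 < Br.[t] /\ complex.Re (U.[t%:C] / V.[t%:C]) = Ar.[t] / Br.[t].
Proof.
exists (map_poly (@complex.Re R) (U * map_poly conjc V)).
exists (map_poly (@complex.Re R) (V * map_poly conjc V)) => t V0.
have conjV : (map_poly conjc V).[t%:C] = conjc V.[t%:C].
  by rewrite -[in LHS](conjc_real t) horner_map.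
rewrite !horner_map_Re !hornerM conjV mulc_conj /=.
have nV : normc V.[t%:C] ^+ 2 != 0 by rewrite expf_eq0 normc_eq0.
split; first by rewrite lt_def nV sqr_ge0.
have -> : U.[t%:C] / V.[t%:C] =
    U.[t%:C] * conjc V.[t%:C] * ((normc V.[t%:C] ^+ 2)^-1)%:C.
  by rewrite fmorphV /= -mulc_conj; field; rewrite fmorph_eq0 V0.
by case: (U.[t%:C] * _) => x y /=; rewrite mulr0 subr0.
Qed.

Lemma ratio_near_lattice_const (Ar Br : {poly R}) (M : R) (k0 k1 : nat) :
  0 < M -> (forall t, 0 <= t <= 1 -> 0 < Br.[t]) ->
  (forall t, 0 <= t <= 1 ->
     exists k : nat, `|Ar.[t] / Br.[t] - M * k%:R| <= M / 4%:R) ->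
  `|Ar.[0] / Br.[0] - M * k0%:R| <= M / 4%:R ->
  `|Ar.[1] / Br.[1] - M * k1%:R| <= M / 4%:R -> k0 = k1.
Proof.
move=> M_gt0 Br_gt0 near near0 near1; apply/eqP/contraT => k01.
pose c := M * ((minn k0 k1)%:R + 2^-1).
have valE t : 0 <= t <= 1 -> (Ar - c *: Br).[t] = Br.[t] * (Ar.[t] / Br.[t] - c).
  move=> t01; have := Br_gt0 t t01 => Bt.
  by rewrite hornerD hornerN hornerZ; field; rewrite gt_eqF.
have t0 : 0 <= (0 : R) <= 1 by rewrite lexx ler01.
have t1 : 0 <= (1 : R) <= 1 by rewrite lexx ler01.
have cross : (Ar.[0] / Br.[0] - c) * (Ar.[1] / Br.[1] - c) <= 0.
  move: near0 near1; rewrite /c !ler_norml => /andP[a0 a1] /andP[b0 b1].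
  case: (ltngtP k0 k1) k01 => // k_lt _.
    have : M * (k0%:R + 1) <= M * k1%:R by rewrite ler_pM2l // natr1 ler_nat.
    by move=> ?; apply: mulr_le0_ge0; lra.
  have : M * (k1%:R + 1) <= M * k0%:R by rewrite ler_pM2l // natr1 ler_nat.
  by move=> ?; apply: mulr_ge0_le0; lra.
have [s s01 rs] : exists2 s, 0 <= s <= 1 & root (Ar - c *: Br) s.
  have [|s] := @polyrcf.poly_ivt _ (Ar - c *: Br) 0 1 ler01.
    rewrite (valE 0 t0) (valE 1 t1) mulrACA pmulr_rle0 //.
    by rewrite mulr_gt0 ?Br_gt0.
  by rewrite in_itv /=; exists s.
move: rs; rewrite rootE valE // mulf_eq0 gt_eqF ?Br_gt0 //= subr_eq0 => /eqP Gs.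
have [k] := near s s01; rewrite Gs /c ler_norml => /andP[k1' k2'].
have M4 : 0 < M / 4%:R by apply: divr_gt0.
case: (leqP k (minn k0 k1)) => hk.
  have : (k%:R : R) <= (minn k0 k1)%:R by rewrite ler_nat.
  nra.
have : ((minn k0 k1)%:R : R) + 1 <= k%:R by rewrite natr1 ler_nat.
nra.
Qed.

Lemma logder_sum_pencil_ratio (P D : {poly R[i]}) (Z : seq R[i]) :
  exists Ar Br : {poly R}, forall t : R,
    all (fun z => (P + t%:C *: D).[z] != 0) Z ->
    0 < Br.[t] /\ complex.Re (logder_sum Z (P + t%:C *: D)) = Ar.[t] / Br.[t].
Proof.
have [U [V ratio]] := horner_sum_ratio Z
  (fun z => (z * P^`().[z])%:P + (z * D^`().[z]) *: 'X)
  (fun z => P.[z]%:P + D.[z] *: 'X).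
have [Ar [Br reE]] := Re_horner_ratio U V.
exists Ar, Br => t nz.
have pencilE z : (P + t%:C *: D).[z] = (P.[z]%:P + D.[z] *: 'X).[t%:C].
  by rewrite !hornerE mulrC.
have [|V0 sumE] := ratio t%:C.
  by apply/allP => z /(allP nz); rewrite pencilE.
have [Br_gt0 ReE] := reE t V0; split => //; rewrite -sumE in ReE.
rewrite -ReE /logder_sum; congr complex.Re; apply: eq_bigr => z _.
by rewrite derivD derivZ !hornerE; congr (_ / _); ring.
Qed.

End RealParts.

Section PencilRootCount.
Variable R : rcfType.
Variables (P D : {poly R[i]}) (r : R).
Hypothesis r_gt1 : 1 < r.
Hypothesis pencil_roots : forall t : R, 0 <= t <= 1 ->
  forall w, root (P + t%:C *: D) w -> (normc w <= 1) || (r <= normc w).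

Lemma pencil_neq0 (t : R) : 0 <= t <= 1 -> P + t%:C *: D != 0.
Proof.
move=> t01; apply/eqP => h0; have := pencil_roots t01 (w := ((1 + r) / 2 : R)%:C).
rewrite h0 root0 normc_real ger0_norm => [/(_ isT)/orP[]|]; have := r_gt1; lra.
Qed.

Lemma size_pencil (t : R) : (size (P + t%:C *: D)%R <= maxn (size P) (size D))%N.
Proof.
apply: leq_trans (size_polyD _ _) _; rewrite geq_max leq_maxl.
exact: leq_trans (size_scale_leq _ _) (leq_maxr _ _).
Qed.

Section Circle.
Variables (N : nat) (rho : R) (Z : seq R[i]).
Hypothesis N_gt0 : (0 < N)%N.
Hypothesis rho_gt1 : 1 < rho.
Hypothesis rho2_le : rho ^+ 2 <= r.
Hypothesis rhoN_ge : (4 * maxn (size P) (size D) + 1)%:R <= rho ^+ N.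
Hypothesis XnE : 'X^N - ((rho ^+ N)%:C)%:P = \prod_(z <- Z) ('X - z%:P).

Lemma Re_logder_sum_pencil_near (t : R) (c : R[i]) (s : seq R[i]) :
  0 <= t <= 1 -> P + t%:C *: D = c *: \prod_(w <- s) ('X - w%:P) ->
  `|complex.Re (logder_sum Z (P + t%:C *: D))
    - (N * count (fun w => normc w <= 1) s)%:R| <= N%:R / 4%:R.
Proof.
move=> t01 hE; have c_neq0 : c != 0.
  by apply: contraNneq (pencil_neq0 t01) => c_eq0; rewrite hE c_eq0 scale0r.
rewrite hE; apply: (Re_logder_sum_near_count (K := maxn (size P) (size D)) (rho := rho)) => //.
  by have := size_pencil t; rewrite hE size_scale // size_prod_XsubC => /ltnW.
apply/allP => w ws; have /orP[->//|rw] : (normc w <= 1) || (r <= normc w).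
  by apply: (pencil_roots t01); rewrite hE rootZ // root_prod_XsubC.
by rewrite (le_trans rho2_le rw) orbT.
Qed.

Lemma pencil_count_disk_const_circle (c0 c1 : R[i]) (s0 s1 : seq R[i]) :
  P = c0 *: \prod_(w <- s0) ('X - w%:P) ->
  P + D = c1 *: \prod_(w <- s1) ('X - w%:P) ->
  count (fun w => normc w <= 1) s0 = count (fun w => normc w <= 1) s1.
Proof.
move=> P0E P1E.
have t0 : 0 <= (0 : R) <= 1 by rewrite lexx ler01.
have t1 : 0 <= (1 : R) <= 1 by rewrite lexx ler01.
have [Ar [Br ratio]] := logder_sum_pencil_ratio P D Z.
have ratio01 t : 0 <= t <= 1 ->
    0 < Br.[t] /\ complex.Re (logder_sum Z (P + t%:C *: D)) = Ar.[t] / Br.[t].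
  move=> t01; apply: ratio; apply/allP => z zZ; apply/negP => /(pencil_roots t01).
  rewrite (normc_root_XnsubC N_gt0 (ltW (lt_trans ltr01 rho_gt1)) XnE zZ).
  have rho_lt : rho < rho ^+ 2 by rewrite expr2 ltr_pMr ?(lt_trans ltr01 rho_gt1).
  by case/orP => h; have := rho_gt1; have := rho2_le; lra.
apply: (@ratio_near_lattice_const _ Ar Br N%:R) => [||t t01||].
- by rewrite ltr0n.
- by move=> t /ratio01[].
- have [s sE] := closed_field_poly_normal (P + t%:C *: D).
  exists (count (fun w => normc w <= 1) s); rewrite -natrM -(ratio01 t t01).2.
  exact: Re_logder_sum_pencil_near t01 sE.
- rewrite -natrM -(ratio01 0 t0).2; apply: (Re_logder_sum_pencil_near (c := c0) t0).
  by rewrite rmorph0 scale0r addr0.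
- rewrite -natrM -(ratio01 1 t1).2; apply: (Re_logder_sum_pencil_near (c := c1) t1).
  by rewrite rmorph1 scale1r.
Qed.

End Circle.
End PencilRootCount.

Lemma pencil_count_disk_const (R : realType) (P D : {poly R[i]}) (r : R)
    (c0 c1 : R[i]) (s0 s1 : seq R[i]) :
  1 < r ->
  (forall t : R, 0 <= t <= 1 -> forall w,
     root (P + t%:C *: D) w -> (normc w <= 1) || (r <= normc w)) ->
  P = c0 *: \prod_(w <- s0) ('X - w%:P) ->
  P + D = c1 *: \prod_(w <- s1) ('X - w%:P) ->
  count (fun w => normc w <= 1) s0 = count (fun w => normc w <= 1) s1.
Proof.
move=> r_gt1 pencil_roots.
have rho_gt1 : 1 < Num.sqrt r by rewrite -sqrtr1 ltr_sqrt; lra.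
have rho2 : Num.sqrt r ^+ 2 <= r by rewrite sqr_sqrtr //; lra.
have [N N_gt0 rhoN] := exists_exprn_ge (4 * maxn (size P) (size D) + 1)%:R rho_gt1.
have [Z XnE] := closed_field_poly_normal ('X^N - ((Num.sqrt r ^+ N)%:C)%:P).
rewrite (monicP (monicXnsubC _ N_gt0)) scale1r in XnE.
exact: (pencil_count_disk_const_circle r_gt1 pencil_roots N_gt0 rho_gt1 rho2 rhoN XnE).
Qed.

Section CriticalPoints.
Variable R : realType.
Variables (a b : seq R[i]) (d : R).
Hypothesis a_disk : all (fun z => normc z <= 1) a.
Hypothesis b_out : all (fun z => d <= normc z) b.
Hypothesis radius_gt1 : 1 < crit_radius (size a) (size b) d.

Local Notation P := (\prod_(z <- a ++ b) ('X - z%:P)).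
Local Notation r := (crit_radius (size a) (size b) d).

(* At w, P + t (X P' - P) is P(w) ((1 - t) + t w P'(w)/P(w)). *)
Lemma crit_pencil_root (t : R) : 0 <= t <= 1 -> forall w : R[i],
  root (P + t%:C *: ('X * P^`() - P)) w -> (normc w <= 1) || (r <= normc w).
Proof.
move=> /andP[t0 t1] w; case: (leP (normc w) 1) => //= w1; rewrite leNgt => hw.
apply/negP => wr; have [_ wd] := lt_crit_radius (normc_ge0 w) wr.
have wa : w \notin a by apply/negP => /(allP a_disk); lra.
have wb : w \notin b by apply/negP => /(allP b_out); lra.
have wab : w \notin a ++ b by rewrite mem_cat negb_or wa wb.
have Pw : P.[w] != 0 by rewrite -/(root _ _) root_prod_XsubC.
have Re_gt0 := Re_sum_div_sub_gt0 a_disk b_out w1 wr.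
move: hw; rewrite rootE !hornerE horner_deriv_prod_XsubC //.
have -> : P.[w] + t%:C * (w * (P.[w] * \sum_(z <- a ++ b) (w - z)^-1) - P.[w]) =
    P.[w] * (1 - t%:C + t%:C * \sum_(z <- a ++ b) w / (w - z)) by rewrite -mulr_sumr; ring.
rewrite mulf_eq0 (negbTE Pw) /= => /eqP/(congr1 (@complex.Re R)).
have Re_mulC (X : R[i]) : complex.Re (t%:C * X) = t * complex.Re X.
  by case: X => x y /=; rewrite mul0r subr0.
rewrite Re_add Re_sub Re_mulC /=; move: Re_gt0; move: (complex.Re _) => S S_gt0.
case: (ltP t 1) => [t_lt1 | t_ge1]; first nra.
have -> : t = 1 by lra.
lra.
Qed.

Lemma size_a_gt0 : (0 < size a)%N.
Proof.
have [+ _] := lt_crit_radius ler01 radius_gt1; rewrite mul1r natrD lt0n.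
by apply: contraTneq => ->; rewrite mulr0n mulr0 add0r; have := ler0n R (size b); lra.
Qed.

Lemma count_crit_disk (c : R[i]) (t : seq R[i]) : c != 0 ->
  P^`() = c *: \prod_(w <- t) ('X - w%:P) ->
  count (fun w => normc w <= 1) t = (size a).-1.
Proof.
move=> c0 P'E.
have P1E : P + ('X * P^`() - P) = c *: \prod_(w <- 0 :: t) ('X - w%:P).
  by rewrite addrC subrK P'E big_cons subr0 scalerAr.
have := pencil_count_disk_const radius_gt1 crit_pencil_root (esym (scale1r P)) P1E.
have count0 : count (fun w => normc w <= 1) (0 :: t) =
    addn (normc (0 : R[i]) <= 1)%R (count (fun w => normc w <= 1) t) by [].
rewrite count0 normc0 ler01 count_cat (eqP (etrans (esym (all_count _ _)) a_disk)).
have -> : count (fun w => normc w <= 1) b = 0%N.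
  apply/eqP; rewrite -leqn0 leqNgt -has_count; apply/hasPn => z /(allP b_out) dz.
  have [_ d_gt1] := lt_crit_radius ler01 radius_gt1; rewrite -ltNge; lra.
by rewrite addn0 => ->.
Qed.

Lemma count_crit_out (c : R[i]) (t : seq R[i]) : c != 0 ->
  P^`() = c *: \prod_(w <- t) ('X - w%:P) ->
  count (fun w => r <= normc w) t = size b.
Proof.
move=> c0 P'E.
have size_t : (size t).+1 = (size a + size b)%N.
  by have := size_deriv_num P; rewrite P'E size_scale // !size_prod_XsubC size_cat.
have t_split : {in t, (fun w => r <= normc w) =1 predC (fun w => normc w <= 1)}.
  move=> w wt /=; have t1 : 0 <= (1 : R) <= 1 by rewrite ler01 lexx.
  have := crit_pencil_root t1 (w := w).
  rewrite rmorph1 scale1r addrC subrK P'E rootM rootZ // root_prod_XsubC wt orbT.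
  case: leP => /= w1 /(_ isT) => [_|-> //].
  by apply/negbTE; rewrite -ltNge (le_lt_trans w1 radius_gt1).
have := count_predC (fun w => normc w <= 1) t.
rewrite (count_crit_disk c0 P'E) -(eq_in_count t_split) => E.
apply: (@addnI (size a).-1); rewrite E; apply: succn_inj.
by rewrite size_t -addSn prednK // size_a_gt0.
Qed.

End CriticalPoints.

Theorem theorem1 (R : realType) (n m : nat) (p : {poly R[i]})
    (a b : seq R[i]) (d : R) :
  (1 <= n)%N -> (1 <= m)%N ->
  size p = (n + m).+1 ->
  size a = n -> size b = m ->
  p = lead_coef p *: \prod_(z <- a ++ b) ('X - z%:P) ->
  all (fun z => `|z| <= 1) a ->
  all (fun z => 1 < `|z|) b ->
  all (fun z => d%:C <= `|z|) b ->
  1 + 2 * m%:R / n%:R < d ->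
  1 < (d * n%:R - m%:R) / (n + m)%:R /\
  (forall t : seq R[i],
     p^`() = lead_coef p^`() *: \prod_(w <- t) ('X - w%:P) ->
     count (fun w => `|w| <= 1) t = n.-1 /\
     count (fun w => ((d * n%:R - m%:R) / (n + m)%:R)%:C <= `|w|) t = m).
Proof.
move=> n_gt0 _ size_p size_a size_b pE a_disk _ b_out hd; subst n m.
have r_gt1 := crit_radius_gt1 n_gt0 hd.
split=> // t p'E; set P := \prod_(z <- a ++ b) ('X - z%:P) in pE.
have a_disk' : all (fun z => normc z <= 1) a.
  by apply/allP => z /(allP a_disk); rewrite normC_le1.
have b_out' : all (fun z => d <= normc z) b.
  by apply/allP => z /(allP b_out); rewrite lec_normC.
have lc_neq0 : lead_coef p != 0 by rewrite lead_coef_eq0 -size_poly_eq0 size_p.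
have lc'_neq0 : lead_coef p^`() != 0.
  by rewrite lead_coef_eq0 -size_poly_eq0 size_deriv_num size_p -lt0n /= addn_gt0 n_gt0.
have P'E : P^`() = ((lead_coef p)^-1 * lead_coef p^`()) *: \prod_(w <- t) ('X - w%:P).
  by rewrite -scalerA -p'E {2}pE derivZ scalerA mulVf // scale1r.
have c_neq0 : (lead_coef p)^-1 * lead_coef p^`() != 0 by rewrite mulf_neq0 ?invr_eq0.
rewrite (eq_count (@normC_le1 R)) (eq_count (@lec_normC R _)).
by rewrite (count_crit_disk a_disk' b_out' r_gt1 c_neq0 P'E) (count_crit_out a_disk' b_out' r_gt1 c_neq0 P'E).
Qed.
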